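(* Let $r\in\mathbb{R}$. For all integers $n \geq m \geq 0$, \[ S_2(n,m) = \sum_{l=0}^m \binom{n}{l} (-1)^l r^l S_{2,r}(n-l,m-l). \]
   Context: $S_2(n,k)$ denotes the Stirling numbers of the second kind, given by $\frac{1}{k!}(e^t-1)^k = \sum_{n\ge k} S_2(n,k)\frac{t^n}{n!}$. For $r\in\mathbb{R}$ and integer $k\ge 0$, the extended Stirling numbers of the second kind $S_{2,r}(n,k)$ are defined by \[ \frac{1}{k!}(e^t-1+rt)^k = \sum_{n=k}^\infty S_{2,r}(n,k)\frac{t^n}{n!}, \] with $S_{2,r}(a,b)=0$ whenever $a<b$. *)

From HB Require Import structures.
From mathcomp Require Import all_boot all_order all_algebra.
From mathcomp Require Import reals.
Set Implicit Arguments. Unset Strict Implicit. Unset Printing Implicit Defensive.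
Import Order.TTheory GRing.Theory Num.Theory.
Local Open Scope ring_scope.

(* Coefficients of degree <= N of any product of power series only depend on
   the coefficients of degree <= N of the factors, so the exact coefficient
   [t^n] of a power of (e^t - 1 + r t) is obtained by truncating at N = n. *)
Definition exp_trunc (R : realType) (N : nat) : {poly R} :=
  \poly_(i < N.+1) (i`!%:R)^-1.

(* Stirling numbers of the second kind:
   (1/k!) (e^t - 1)^k = sum_{n>=k} S2 n k t^n / n!,
   so S2 n k = n!/k! * [t^n] (e^t - 1)^k  (and 0 for n < k automatically). *)
Definition S2 (R : realType) (n k : nat) : R :=
  n`!%:R / k`!%:R * ((exp_trunc R n - 1) ^+ k)`_n.

(* Extended Stirling numbers of the second kind:
   (1/k!) (e^t - 1 + r t)^k = sum_{n>=k} S2r r n k t^n / n!. *)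
Definition S2r (R : realType) (r : R) (n k : nat) : R :=
  n`!%:R / k`!%:R * ((exp_trunc R n - 1 + r *: 'X) ^+ k)`_n.

From HB Require Import structures.
From mathcomp Require Import all_boot all_order all_algebra.
From mathcomp Require Import reals.
From mathcomp Require Import ring.
Import Order.TTheory GRing.Theory Num.Theory.
Local Open Scope ring_scope.

(* Write e^t - 1 = (e^t - 1 + r t) + (-r) t and expand the m-th power by the
   binomial theorem.  The t^n coefficient of the l-th term is
   C(m,l) (-r)^l [t^(n-l)] (e^t - 1 + r t)^(m-l), which is S2r r (n-l) (m-l)
   up to factorials, because the t^(n-l) coefficient of a power only sees the
   series truncated at degree n-l. *)

Section TakePoly.
Variable R : nzSemiRingType.
Implicit Types p q : {poly R}.

Lemma take_polyMl N p q : take_poly N (take_poly N p * q) = take_poly N (p * q).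
Proof.
rewrite -{2}(poly_take_drop N p) mulrDl -mulrA -(commr_polyXn q) mulrA.
by rewrite take_polyD take_polyMXn_0 addr0.
Qed.

Lemma take_polyMr N p q : take_poly N (p * take_poly N q) = take_poly N (p * q).
Proof.
rewrite -{2}(poly_take_drop N q) mulrDr mulrA.
by rewrite take_polyD take_polyMXn_0 addr0.
Qed.

Lemma take_polyXn N p k :
  take_poly N (take_poly N p ^+ k) = take_poly N (p ^+ k).
Proof.
elim: k => [|k IHk]; first by rewrite !expr0.
by rewrite !exprS -take_polyMr IHk take_polyMr take_polyMl.
Qed.

Lemma coef_exprn_take_poly p j k : (p ^+ k)`_j = (take_poly j.+1 p ^+ k)`_j.
Proof.
have := congr1 (fun q => q`_j) (take_polyXn j.+1 p k).
by rewrite !coef_take_poly ltnSn => ->.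
Qed.

End TakePoly.

Lemma coef_exprDZX (R : comNzSemiRingType) (p : {poly R}) (c : R) m n :
  (m <= n)%N ->
  ((p + c *: 'X) ^+ m)`_n =
  \sum_(l < m.+1) 'C(m, l)%:R * c ^+ l * (p ^+ (m - l))`_(n - l).
Proof.
move=> le_mn; rewrite exprDn coef_sum.
apply: eq_bigr => -[l /=]; rewrite ltnS => le_lm _.
have le_ln : (l <= n)%N by apply: leq_trans le_mn.
rewrite exprZn -scalerAr coefMn coefZ coefMXn ltnNge le_ln /=.
by rewrite -mulrA mulr_natl.
Qed.

Lemma take_exp_trunc (R : realType) (N j : nat) :
  (j <= N)%N -> take_poly j.+1 (exp_trunc R N) = exp_trunc R j.
Proof.
move=> le_jN; apply/polyP => i; rewrite coef_take_poly !coef_poly.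
by case: ltnP => // lt_ij; rewrite (leq_trans lt_ij) ?ltnS.
Qed.

Lemma coef_exp_trunc_exprn (R : realType) (q : {poly R}) (N j k : nat) :
  (j <= N)%N -> ((exp_trunc R N + q) ^+ k)`_j = ((exp_trunc R j + q) ^+ k)`_j.
Proof.
move=> le_jN; rewrite coef_exprn_take_poly [RHS]coef_exprn_take_poly.
by rewrite !take_polyD !take_exp_trunc.
Qed.

Lemma fact_ratio_bin (R : numFieldType) {n m l : nat} :
  (l <= m)%N -> (l <= n)%N ->
  n`!%:R / m`!%:R * 'C(m, l)%:R =
  'C(n, l)%:R * ((n - l)`!%:R / (m - l)`!%:R) :> R.
Proof.
move=> le_lm le_ln.
have fact_neq0 k : (k`!%:R : R) != 0 by rewrite pnatr_eq0 -lt0n fact_gt0.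
have binm_neq0 : ('C(m, l)%:R : R) != 0 by rewrite pnatr_eq0 -lt0n bin_gt0.
rewrite -(bin_fact le_lm) -(bin_fact le_ln).
rewrite !natrM; field.
by rewrite !fact_neq0 binm_neq0.
Qed.

Theorem theorem3 (R : realType) (r : R) (n m : nat) :
  (m <= n)%N ->
  S2 R n m =
  \sum_(l < m.+1)
     'C(n, l)%:R * (-1) ^+ l * r ^+ l * S2r r (n - l) (m - l).
Proof.
move=> le_mn; rewrite /S2.
have -> : exp_trunc R n - 1 = exp_trunc R n - 1 + r *: 'X + (- r) *: 'X.
  by rewrite scaleNr addrK.
rewrite coef_exprDZX // mulr_sumr.
apply: eq_bigr => -[l /=]; rewrite ltnS => le_lm _.
have le_ln : (l <= n)%N by apply: leq_trans le_mn.
rewrite -!addrA coef_exp_trunc_exprn ?leq_subr // !addrA /S2r.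
rewrite -[- r]mulN1r exprMn.
by rewrite !mulrA (fact_ratio_bin R le_lm le_ln); ring.
Qed.
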